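(* Assume $\mathcal G$ is connected. Let $\mathrm y^\star=(\mathrm y^\star_1,\dots,\mathrm y^\star_{|\mathbb V|})\in(\mathbb R^d)^{|\mathbb V|}$ and $\zeta^\star=\mathcal E^T\mathrm y^\star$, and define $A:\mathbb R^d\to\mathbb R\cup\{+\infty\}$ by $A(\beta)=K^\star(\mathrm y^\star+\mathbf 1_{|\mathbb V|}\otimes\beta)=\sum_{i=1}^{|\mathbb V|}K_i^\star(\mathrm y_i^\star+\beta)$. If $\mathbf 0\in\sum_{i=1}^{|\mathbb V|}k_i^{-1}(\mathrm y_i^\star)$ and $A$ is strictly convex on a neighborhood of $\beta=0$, then $\mathrm y^\star$ is the unique minimizer of $K^\star(\mathrm y)$ over the set $\{\mathrm y:\mathcal E^T\mathrm y=\zeta^\star\}$.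
   Context: $\mathcal G=(\mathbb V,\mathbb E)$ is a finite graph with arbitrarily oriented edges and incidence matrix $E$ ($E_{ik}=-1$, $E_{jk}=1$ for edge $k=(i,j)$, other entries of column $k$ zero); $d\ge1$, $\mathcal E=E\otimes I_d$; $\mathbf 1_{|\mathbb V|}$ the all-ones vector. For each $i\in\mathbb V$, $k_i\subseteq\mathbb R^d\times\mathbb R^d$ is a maximal cyclically monotone relation (cyclically monotone: $\sum_{j=1}^N y_j^T(u_j-u_{j-1})\ge0$ for all $N\ge1$, $(u_1,y_1),\dots,(u_N,y_N)\in k_i$, $u_0=u_N$; maximal: not strictly contained in a larger such relation), so $k_i=\partial K_i$ for a closed proper convex $K_i:\mathbb R^d\to\mathbb R\cup\{+\infty\}$; $K_i^\star(y)=\sup_u\{y^Tu-K_i(u)\}$, $K^\star(\mathrm y)=\sum_iK_i^\star(\mathrm y_i)$, $k_i^{-1}(\mathrm y_i)=\{\mathrm u_i:(\mathrm u_i,\mathrm y_i)\in k_i\}$, and the sum of sets is the Minkowski sum. *)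

From HB Require Import structures.
From mathcomp Require Import all_boot.
From Stdlib Require Import Reals ClassicalEpsilon Relation_Operators.
Set Implicit Arguments. Unset Strict Implicit. Unset Printing Implicit Defensive.

Local Open Scope R_scope.

HB.instance Definition _ := Monoid.isComLaw.Build R 0 Rplus (fun x y z => esym (Rplus_assoc x y z)) Rplus_comm Rplus_0_l.

Definition sumR (n : nat) (f : 'I_n -> R) : R := \big[Rplus/0]_(i < n) f i.

Definition vec (d : nat) := 'I_d -> R.
Definition vadd d (u v : vec d) : vec d := fun c => u c + v c.
Definition vsub d (u v : vec d) : vec d := fun c => u c - v c.
Definition vscale d (t : R) (u : vec d) : vec d := fun c => t * u c.
Definition vzero d : vec d := fun _ => 0.
Definition dot d (u v : vec d) : R := sumR (fun c => u c * v c).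
Definition sqnorm d (u : vec d) : R := dot u u.

Inductive ER := Fin (x : R) | PInf.
Definition ER_le (a b : ER) : Prop :=
  match a, b with
  | Fin x, Fin y => x <= y
  | _, PInf => True
  | PInf, Fin _ => False
  end.
Definition ER_lt (a b : ER) : Prop :=
  match a, b with
  | Fin x, Fin y => x < y
  | Fin _, PInf => True
  | PInf, _ => False
  end.
Definition ER_plus (a b : ER) : ER :=
  match a, b with
  | Fin x, Fin y => Fin (x + y)
  | _, _ => PInf
  end.
Definition ER_sum (n : nat) (f : 'I_n -> ER) : ER := \big[ER_plus/Fin 0]_(i < n) f i.

(* Supremum in R ∪ {+oo} of a set of reals (used only for nonempty sets) *)
Definition ER_sup (E : R -> Prop) : ER :=
  match excluded_middle_informative (bound E /\ exists x, E x) with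
  | left H => Fin (proj1_sig (completeness E (proj1 H) (proj2 H)))
  | right _ => PInf
  end.

Definition conj d (K : vec d -> ER) (y : vec d) : ER :=
  ER_sup (fun r => exists u a, K u = Fin a /\ r = dot y u - a).

Definition proper d (K : vec d -> ER) : Prop := exists u a, K u = Fin a.
Definition convex_fun d (K : vec d -> ER) : Prop :=
  forall u v a b t, K u = Fin a -> K v = Fin b -> 0 <= t <= 1 ->
    ER_le (K (vadd (vscale t u) (vscale (1 - t) v))) (Fin (t * a + (1 - t) * b)).
(* closed = lower semicontinuous *)
Definition lsc d (K : vec d -> ER) : Prop :=
  forall u (t : R), ER_lt (Fin t) (K u) ->
    exists eps, 0 < eps /\ forall v, sqnorm (vsub v u) < eps -> ER_lt (Fin t) (K v).
Definition closed_proper_convex d (K : vec d -> ER) : Prop :=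
  proper K /\ convex_fun K /\ lsc K.

(* Subdifferential, as a relation: (u, y) ∈ ∂K *)
Definition subdiff d (K : vec d -> ER) (u y : vec d) : Prop :=
  exists a, K u = Fin a /\ forall v, ER_le (Fin (a + dot y (vsub v u))) (K v).

(* Cyclically monotone: sum_{j=1}^N y_j^T (u_j - u_{j-1}) >= 0 with u_0 = u_N;
   the sum_f_R0 index i = j - 1 runs over 0..N-1 *)
Definition cyc_mono d (k : vec d -> vec d -> Prop) : Prop :=
  forall (N : nat) (u y : nat -> vec d), (1 <= N)%nat ->
    (forall j, (1 <= j <= N)%nat -> k (u j) (y j)) ->
    0 <= sum_f_R0 (fun i => dot (y (S i))
                    (vsub (u (S i)) (if (i == 0)%nat then u N else u i)))
                  (N - 1)%nat.
Definition max_cyc_mono d (k : vec d -> vec d -> Prop) : Prop :=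
  cyc_mono k /\
  forall k' : vec d -> vec d -> Prop, cyc_mono k' -> (forall u y, k u y -> k' u y) ->
    forall u y, k' u y -> k u y.

Definition incidence n m (src dst : 'I_m -> 'I_n) (i : 'I_n) (e : 'I_m) : R :=
  (if dst e == i then 1 else 0) - (if src e == i then 1 else 0).
(* (E ⊗ I_d)^T y *)
Definition ET n m d (src dst : 'I_m -> 'I_n) (y : 'I_n -> vec d) : 'I_m -> vec d :=
  fun e c => sumR (fun i => incidence src dst i e * y i c).
Definition adj n m (src dst : 'I_m -> 'I_n) (a b : 'I_n) : Prop :=
  exists e, (src e = a /\ dst e = b) \/ (src e = b /\ dst e = a).
Definition connected n m (src dst : 'I_m -> 'I_n) : Prop :=
  forall a b, clos_refl_trans _ (adj src dst) a b.

Definition Kstar n d (K : 'I_n -> vec d -> ER) (y : 'I_n -> vec d) : ER :=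
  ER_sum (fun i => conj (K i) (y i)).

(* strict convexity on the ball of radius eps (squared-norm < eps) around 0,
   restricted to the effective domain *)
Definition strictly_convex_near0 d (A : vec d -> ER) : Prop :=
  exists eps, 0 < eps /\
  forall b1 b2 a1 a2 t, sqnorm b1 < eps -> sqnorm b2 < eps -> b1 <> b2 ->
    A b1 = Fin a1 -> A b2 = Fin a2 -> 0 < t < 1 ->
    ER_lt (A (vadd (vscale t b1) (vscale (1 - t) b2))) (Fin (t * a1 + (1 - t) * a2)).

Definition unique_minimizer (X : Type) (f : X -> ER) (S : X -> Prop) (x : X) : Prop :=
  S x /\ (forall y, S y -> ER_le (f x) (f y)) /\
  (forall y, S y -> (forall z, S z -> ER_le (f y) (f z)) -> y = x).

(* The constraint E^T y = E^T y* on a connected graph says exactly that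
   y = y* + 1 ⊗ β for some β, so the problem reduces to minimizing
   A(β) = Σ_i K_i^*(y*_i + β).  If u_i ∈ k_i^{-1}(y*_i) with Σ_i u_i = 0, then
   u_i is a subgradient of K_i^* at y*_i (Fenchel–Young), and summing the
   subgradient inequalities gives A(β) ≥ A(0): β = 0 is a minimizer.  Any
   other minimizer β ≠ 0 would, by convexity of A, make the whole segment
   [0, β] minimizing, contradicting strict convexity of A near 0. *)
From HB Require Import structures.
From mathcomp Require Import all_boot.
From Stdlib Require Import Reals ClassicalEpsilon Relation_Operators Lra FunctionalExtensionality.
Set Implicit Arguments. Unset Strict Implicit. Unset Printing Implicit Defensive.
Local Open Scope R_scope.

Lemma sumR_ext n (f g : 'I_n -> R) : (forall i, f i = g i) -> sumR f = sumR g.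
Proof. by move=> fg; apply: eq_bigr. Qed.

Lemma sumR_add n (f g : 'I_n -> R) : sumR (fun i => f i + g i) = sumR f + sumR g.
Proof. exact: big_split. Qed.

Lemma sumR_sub n (f g : 'I_n -> R) : sumR (fun i => f i - g i) = sumR f - sumR g.
Proof.
apply: (big_ind3 (fun x y z => x = y - z)) => //; first by rewrite Rminus_0_r.
by move=> a b x y z w -> ->; ring.
Qed.

Lemma sumR_scal n c (f : 'I_n -> R) : sumR (fun i => c * f i) = c * sumR f.
Proof.
apply: (big_ind2 (fun x y => x = c * y)) => //; first by rewrite Rmult_0_r.
by move=> a b x y -> ->; ring.
Qed.

Lemma sumR_eq0 n (f : 'I_n -> R) : (forall i, f i = 0) -> sumR f = 0.
Proof. by move=> f0; apply: big1. Qed.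

Lemma sumR_ge0 n (f : 'I_n -> R) : (forall i, 0 <= f i) -> 0 <= sumR f.
Proof. by move=> f0; apply: (big_ind (fun x => 0 <= x)) => //= *; lra. Qed.

Lemma sumR_delta n (j : 'I_n) (f : 'I_n -> R) :
  sumR (fun i => (if j == i then 1 else 0) * f i) = f j.
Proof.
rewrite /sumR (bigD1 j) //= eqxx big1 => [|i ij]; first by simpl; ring.
by rewrite eq_sym (negbTE ij) Rmult_0_l.
Qed.

Lemma sumR_exchange n p (F : 'I_n -> 'I_p -> R) :
  sumR (fun i => sumR (F i)) = sumR (fun c => sumR (fun i => F i c)).
Proof. exact: exchange_big. Qed.

Lemma vec_ext d (u v : vec d) : (forall c, u c = v c) -> u = v.
Proof. exact: functional_extensionality. Qed.

Lemma vadd0r d (u : vec d) : vadd u (@vzero d) = u.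
Proof. by apply: vec_ext => c; rewrite /vadd /vzero Rplus_0_r. Qed.

Lemma dot_vaddl d (y b u : vec d) : dot (vadd y b) u = dot y u + dot b u.
Proof. by rewrite /dot -sumR_add; apply: sumR_ext => c; rewrite /vadd; ring. Qed.

Lemma dot_vscalel d t (y u : vec d) : dot (vscale t y) u = t * dot y u.
Proof. by rewrite /dot -sumR_scal; apply: sumR_ext => c; rewrite /vscale; ring. Qed.

Lemma dot_vsubr d (y v u : vec d) : dot y (vsub v u) = dot y v - dot y u.
Proof. by rewrite /dot -sumR_sub; apply: sumR_ext => c; rewrite /vsub; ring. Qed.

Lemma sqnorm_ge0 d (u : vec d) : 0 <= sqnorm u.
Proof. by apply: sumR_ge0 => c; apply: Rle_0_sqr. Qed.

Lemma sqnorm_vscale d t (u : vec d) : sqnorm (vscale t u) = t * t * sqnorm u.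
Proof. by rewrite /sqnorm /dot -sumR_scal; apply: sumR_ext => c; rewrite /vscale; ring. Qed.

Lemma sqnorm_vzero d : sqnorm (@vzero d) = 0.
Proof. by apply: sumR_eq0 => c; rewrite /vzero Rmult_0_l. Qed.

Lemma ET_edge n m d (src dst : 'I_m -> 'I_n) (y : 'I_n -> vec d) e c :
  ET src dst y e c = y (dst e) c - y (src e) c.
Proof.
rewrite /ET -(sumR_delta (dst e) (y^~ c)) -(sumR_delta (src e) (y^~ c)) -sumR_sub.
by apply: sumR_ext => i; rewrite /incidence; ring.
Qed.

Lemma connected_ET_eq n m d (src dst : 'I_m -> 'I_n) (y z : 'I_n -> vec d) :
  connected src dst -> ET src dst y = ET src dst z ->
  exists b : vec d, y = fun i => vadd (z i) b.
Proof.
move=> conn yz.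
have diff_const a b c : y a c - z a c = y b c - z b c.
  elim: (conn a b) => [x w [e [[<- <-]|[<- <-]]]| x | x w v _ h1 _ h2]; try lra;
  by have := f_equal (fun f => f e c) yz; rewrite /= !ET_edge; lra.
case: n => [|n] in src dst y z conn yz diff_const *.
  by exists (@vzero d); apply: functional_extensionality => -[].
exists (fun c => y ord0 c - z ord0 c).
apply: functional_extensionality => i; apply: vec_ext => c.
by rewrite /vadd (diff_const ord0 i c); ring.
Qed.

Lemma ER_le_antisym x s : ER_le x (Fin s) -> ER_le (Fin s) x -> x = Fin s.
Proof. by case: x => [a|] //= h1 h2; f_equal; lra. Qed.

Lemma ER_sup_ge (E : R -> Prop) x : E x -> ER_le (Fin x) (ER_sup E).
Proof.
move=> Ex; rewrite /ER_sup.
destruct excluded_middle_informative as [H|_] => //=.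
by destruct completeness as [s [ub lub]]; apply: ub.
Qed.

Lemma ER_sup_le (E : R -> Prop) M : (exists x, E x) -> (forall x, E x -> x <= M) ->
  ER_le (ER_sup E) (Fin M).
Proof.
move=> ne bnd; rewrite /ER_sup.
destruct excluded_middle_informative as [H|H].
  by destruct completeness as [s [ub lub]]; apply: lub.
by exfalso; apply: H; split; first exists M.
Qed.

Lemma ER_sup_eq (E : R -> Prop) M : E M -> (forall x, E x -> x <= M) -> ER_sup E = Fin M.
Proof.
by move=> EM bnd; apply: ER_le_antisym; [apply: ER_sup_le; first exists M|apply: ER_sup_ge].
Qed.

Lemma ER_sup_FinP (E : R -> Prop) s : ER_sup E = Fin s ->
  (exists x, E x) /\ (forall x, E x -> x <= s).
Proof.
rewrite /ER_sup; destruct excluded_middle_informative as [H|] => //.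
by destruct completeness as [s' [ub lub]] => -[<-]; split; [case: H|].
Qed.

Lemma ER_sum_Fin n (f : 'I_n -> ER) g :
  (forall i, f i = Fin (g i)) -> ER_sum f = Fin (sumR g).
Proof.
move=> fg; apply: (big_ind2 (fun x y => x = Fin y)) => //.
by move=> a b x y -> ->.
Qed.

Lemma ER_sum_ge n (f : 'I_n -> ER) g :
  (forall i, ER_le (Fin (g i)) (f i)) -> ER_le (Fin (sumR g)) (ER_sum f).
Proof.
move=> fg; apply: (big_ind2 (fun x y => ER_le (Fin y) x)) => //=; first lra.
  by move=> [a|] b [c|] e //= *; lra.
by move=> i _; apply: fg.
Qed.

Definition ER_comb t (a b : ER) : ER :=
  match a, b with Fin x, Fin y => Fin (t * x + (1 - t) * y) | _, _ => PInf end.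

Lemma convex_funP d (F : vec d -> ER) : convex_fun F <->
  forall u v t, 0 <= t <= 1 ->
    ER_le (F (vadd (vscale t u) (vscale (1 - t) v))) (ER_comb t (F u) (F v)).
Proof.
split=> [cvx u v t t01 | cvx u v a b t Fu Fv t01].
  case Fu: (F u) => [a|]; case Fv: (F v) => [b|] /=; try by case: (F _).
  exact: cvx.
by have := cvx u v t t01; rewrite Fu Fv.
Qed.

Lemma convex_fun_shift d (F : vec d -> ER) (y : vec d) :
  convex_fun F -> convex_fun (fun b => F (vadd y b)).
Proof.
move=> /convex_funP cvx; apply/convex_funP => u v t t01.
have -> : vadd y (vadd (vscale t u) (vscale (1 - t) v))
        = vadd (vscale t (vadd y u)) (vscale (1 - t) (vadd y v)).
  by apply: vec_ext => c; rewrite /vadd /vscale; ring.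
exact: cvx.
Qed.

Lemma convex_fun_sum n d (F : 'I_n -> vec d -> ER) :
  (forall i, convex_fun (F i)) -> convex_fun (fun b => ER_sum (fun i => F i b)).
Proof.
move=> cvx; apply/convex_funP => u v t t01.
apply: (big_ind3 (fun x y z => ER_le x (ER_comb t y z))) => /=; first lra.
  by move=> [a|] [b|] [c|] [x|] [y|] [z|] //= *; nra.
by move=> i _; have /convex_funP := cvx i; apply.
Qed.

Lemma conj_convex d (K : vec d -> ER) : convex_fun (conj K).
Proof.
move=> y1 y2 s1 s2 t E1 E2 t01.
have [[x [u [a [Ku _]]]] ub1] := ER_sup_FinP E1.
have [_ ub2] := ER_sup_FinP E2.
apply: ER_sup_le; first by do 3 eexists; split; first exact: Ku.
move=> _ [v [b [Kv ->]]].
have h1 := ub1 (dot y1 v - b) (ex_intro _ v (ex_intro _ b (Logic.conj Kv erefl))).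
have h2 := ub2 (dot y2 v - b) (ex_intro _ v (ex_intro _ b (Logic.conj Kv erefl))).
rewrite dot_vaddl !dot_vscalel; nra.
Qed.

Lemma subdiff_conj d (K : vec d -> ER) (u y : vec d) : subdiff K u y ->
  exists s, conj K y = Fin s /\
    forall b, ER_le (Fin (s + dot b u)) (conj K (vadd y b)).
Proof.
move=> [a [Ku sub]]; exists (dot y u - a); split.
  apply: ER_sup_eq; first by exists u, a.
  by move=> _ [v [b [Kv ->]]]; have := sub v; rewrite Kv /= dot_vsubr; lra.
move=> b; apply: ER_sup_ge; exists u, a; split => //.
by rewrite dot_vaddl; ring.
Qed.

Lemma Kstar_shift_ge n d (K : 'I_n -> vec d -> ER) (y u : 'I_n -> vec d) :
  (forall i, subdiff (K i) (u i) (y i)) -> (forall c, sumR (fun i => u i c) = 0) ->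
  exists s, Kstar K y = Fin s /\
    forall b, ER_le (Fin s) (Kstar K (fun i => vadd (y i) b)).
Proof.
move=> sub usum.
have /all_sig [s /all_and2 [Ks Kb]] :=
  fun i => constructive_indefinite_description _ (subdiff_conj (sub i)).
exists (sumR s); split; first exact: ER_sum_Fin.
move=> b; have := ER_sum_ge (f := fun i => conj (K i) (vadd (y i) b)) (fun i => Kb i b).
rewrite sumR_add.
have -> : sumR (fun i => dot b (u i)) = 0.
  rewrite /dot sumR_exchange; apply: sumR_eq0 => c.
  by rewrite sumR_scal usum Rmult_0_r.
by rewrite Rplus_0_r.
Qed.

Lemma strictly_convex_near0_min_unique d (A : vec d -> ER) s (b : vec d) :
  convex_fun A -> strictly_convex_near0 A -> A (@vzero d) = Fin s ->
  (forall v, ER_le (Fin s) (A v)) -> A b = Fin s -> b = @vzero d.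
Proof.
move=> cvx [eps [eps0 strict]] A0 low Ab.
apply: NNPP => b0.
pose N := sqnorm b; have N0 : 0 <= N := sqnorm_ge0 b.
pose t := eps / (eps + N + 1).
have tN : t * (eps + N + 1) = eps by rewrite /t; field; lra.
have t0 : 0 < t by apply: Rdiv_lt_0_compat; lra.
have t1 : t < 1 by nra.
have tb_small : sqnorm (vscale t b) < eps.
  rewrite sqnorm_vscale -/N.
  have : t * N <= eps - t * eps - t by nra.
  have := Rmult_le_compat_r N (t * t) t N0 ltac:(nra); nra.
have Atb : A (vscale t b) = Fin s.
  apply: ER_le_antisym (low _).
  have := cvx b (@vzero d) s s t Ab A0 ltac:(lra).
  have -> : vadd (vscale t b) (vscale (1 - t) (@vzero d)) = vscale t b.
    by apply: vec_ext => c; rewrite /vadd /vscale /vzero; ring.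
  by have -> : t * s + (1 - t) * s = s by ring.
have tb0 : vscale t b <> @vzero d.
  move=> tb; apply: b0; apply: vec_ext => c.
  have := f_equal (fun f => f c) tb; rewrite /vscale /vzero /= => h.
  by case: (Rmult_integral _ _ h) => //; lra.
have := strict (vscale t b) (@vzero d) s s (1/2) tb_small
  ltac:(rewrite sqnorm_vzero; lra) tb0 Atb A0 ltac:(lra).
by have := low (vadd (vscale (1/2) (vscale t b)) (vscale (1 - 1/2) (@vzero d)));
  case: (A _) => [x|] //=; lra.
Qed.

Theorem mainTheorem9 (n m d : nat) (src dst : 'I_m -> 'I_n)
  (k : 'I_n -> vec d -> vec d -> Prop) (K : 'I_n -> vec d -> ER)
  (hd : (1 <= d)%nat)
  (hconn : connected src dst)
  (hk : forall i, max_cyc_mono (k i))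
  (hK : forall i, closed_proper_convex (K i))
  (hkK : forall i u y, k i u y <-> subdiff (K i) u y)
  (ystar : 'I_n -> vec d)
  (h0 : exists u : 'I_n -> vec d,
          (forall i, k i (u i) (ystar i)) /\
          (forall c, sumR (fun i => u i c) = 0%R))
  (hA : strictly_convex_near0
          (fun beta : vec d => Kstar K (fun i => vadd (ystar i) beta))) :
  unique_minimizer (Kstar K)
    (fun y => ET src dst y = ET src dst ystar) ystar.
Proof.
have [u [hu usum]] := h0.
have [s [Kys low]] : exists s, Kstar K ystar = Fin s /\
    forall b, ER_le (Fin s) (Kstar K (fun i => vadd (ystar i) b)).
  by apply: Kstar_shift_ge usum => i; apply/hkK.
split; [done | split].
  by move=> y /(connected_ET_eq hconn) [b ->]; rewrite Kys.
move=> y /(connected_ET_eq hconn) [b ->] ymin.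
have A_cvx : convex_fun (fun b => Kstar K (fun i => vadd (ystar i) b)).
  by apply: convex_fun_sum => i; apply/convex_fun_shift/conj_convex.
have A0 : Kstar K (fun i => vadd (ystar i) (@vzero d)) = Fin s.
  by rewrite -Kys; congr Kstar; apply: functional_extensionality => i; rewrite vadd0r.
suff -> : b = @vzero d by apply: functional_extensionality => i; rewrite vadd0r.
apply: (strictly_convex_near0_min_unique A_cvx hA A0 low).
by apply: ER_le_antisym (low b); rewrite -Kys; apply: ymin.
Qed.
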